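(* Let $X$, $Y$ be topological spaces, $F\subset X\times Y$ a subspace, and $p\colon F\to X$, $q\colon F\to Y$ the canonical projections. Let $H$ denote homology with coefficients in a field $K$, and assume $HX$, $HF$, $HY$ are finite dimensional. Let $$h=(h_X,h_F,h_Y)\colon \bigl(HX \xleftarrow{p_*} HF \xrightarrow{q_*} HY\bigr)\xrightarrow{\ \cong\ } \bigoplus_{1\le b\le d\le 3}\mathbb{I}[b,d]^{m_{b,d}}$$ be any isomorphism of representations of the quiver $\circ\leftarrow\circ\rightarrow\circ$ onto a direct sum of interval representations. Let $\pi_X$ be the projection of the vertex-1 space of $\bigoplus\mathbb{I}[b,d]^{m_{b,d}}$ onto the vertex-1 space of the summand $\mathbb{I}[1,3]^{m_{1,3}}$ (a copy of $K^{m_{1,3}}$), and $\iota_Y$ the inclusion of the vertex-3 space of $\mathbb{I}[1,3]^{m_{1,3}}$ (again $K^{m_{1,3}}$) into the vertex-3 space of $\bigoplus\mathbb{I}[b,d]^{m_{b,d}}$; identify these two copies of $K^{m_{1,3}}$ via the identity maps of $\mathbb{I}[1,3]$. Define $F_*:=h_Y^{-1}\circ\iota_Y\circ\pi_X\circ h_X\colon HX\to HY$. If $p_*$ is surjective ($\operatorname{Im}p_*=HX$) and $q_*(\operatorname{Ker}p_* )=0$, then $F_*=q_*\circ p_*^{-1}$, where $q_*\circ p_*^{-1}$ denotes the well-defined linear map sending $p_*(z)$ to $q_*(z)$.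
   Context: For a field $K$, the interval representation $\mathbb{I}[b,d]$ ($1\le b\le d\le 3$) of the quiver $1\leftarrow 2\rightarrow 3$ has $K$ at vertices $i\in\{b,\dots,d\}$ and $0$ elsewhere, with identity maps between consecutive copies of $K$ and zero maps otherwise. $\mathbb{I}[b,d]^{m}$ denotes the direct sum of $m$ copies. *)

From HB Require Import structures.
From mathcomp Require Import all_boot all_order all_algebra.
Set Implicit Arguments. Unset Strict Implicit. Unset Printing Implicit Defensive.
Import GRing.Theory.
Local Open Scope ring_scope.

(* The representation  V1 <-alpha- V2 -beta-> V3  of the quiver 1 <- 2 -> 3
   given by  (+)_{1<=b<=d<=3} I[b,d]^{m_bd}.  Vertex spaces are row vectors,
   summands ordered lexicographically in (b,d):
     V1 = K^{m11} (+) K^{m12} (+) K^{m13}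
     V2 = K^{m12} (+) K^{m13} (+) K^{m22} (+) K^{m23}
     V3 = K^{m13} (+) K^{m23} (+) K^{m33}
   Maps act on row vectors on the right (v *m A). *)

Definition V1dim (m11 m12 m13 : nat) := (m11 + m12 + m13)%N.
Definition V2dim (m12 m13 m22 m23 : nat) := (m12 + m13 + m22 + m23)%N.
Definition V3dim (m13 m23 m33 : nat) := (m13 + m23 + m33)%N.

(* the map at the arrow 1 <- 2 : identity on the I[1,2] and I[1,3] parts *)
Definition intv_alpha (K : fieldType) (m11 m12 m13 m22 m23 : nat)
  : 'M[K]_(m12 + m13 + m22 + m23, m11 + m12 + m13) :=
  col_mx (col_mx (col_mx (row_mx (row_mx 0 1%:M) 0) (row_mx 0 1%:M)) 0) 0.

(* the map at the arrow 2 -> 3 : identity on the I[1,3] and I[2,3] parts *)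
Definition intv_beta (K : fieldType) (m12 m13 m22 m23 m33 : nat)
  : 'M[K]_(m12 + m13 + m22 + m23, m13 + m23 + m33) :=
  col_mx (col_mx (col_mx 0 (row_mx (row_mx 1%:M 0) 0)) 0)
         (row_mx (row_mx 0 1%:M) 0).

Definition intv_piX (K : fieldType) (m11 m12 m13 : nat)
  : 'M[K]_(m11 + m12 + m13, m13) := col_mx 0 1%:M.

Definition intv_iotaY (K : fieldType) (m13 m23 m33 : nat)
  : 'M[K]_(m13, m13 + m23 + m33) := row_mx (row_mx 1%:M 0) 0.

From HB Require Import structures.
From mathcomp Require Import all_boot all_order all_algebra.
Set Implicit Arguments. Unset Strict Implicit. Unset Printing Implicit Defensive.
Import GRing.Theory.
Local Open Scope ring_scope.

(* In interval coordinates, pi_X . iota_Y applied after p_* sends the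
   [I[1,3]] component of a vertex-2 vector to itself and kills the rest, so
   it agrees with q_* except on the [I[2,3]] component.  That component lies
   in Ker p_*, hence is killed by q_* as well. *)

Section KernelTransport.

Variables (K : fieldType) (HX HF HY : vectType K) (n1 n2 n3 : nat).
Variables (p : {linear HF -> HX}) (q : {linear HF -> HY}).
Variables (hX : {linear HX -> 'rV[K]_n1}) (hF : {linear HF -> 'rV[K]_n2}).
Variable hY : {linear HY -> 'rV[K]_n3}.
Variables (A : 'M[K]_(n2, n1)) (B : 'M[K]_(n2, n3)).
Hypotheses (hX_inj : injective hX) (hF_bij : bijective hF).
Hypothesis h_p : forall z, hX (p z) = hF z *m A.
Hypothesis h_q : forall z, hY (q z) = hF z *m B.
Hypothesis q_ker : forall z, p z = 0 -> q z = 0.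

Lemma ker_mulmx_transport (v : 'rV[K]_n2) : v *m A = 0 -> v *m B = 0.
Proof.
have [g _ gK] := hF_bij.
move=> vA0; rewrite -[v]gK -h_q q_ker ?linear0 //.
by apply: hX_inj; rewrite h_p gK vA0 linear0.
Qed.

End KernelTransport.

Section IntervalMatrices.

Variables (K : fieldType) (m11 m12 m13 m22 m23 m33 : nat).

Local Notation alpha := (intv_alpha K m11 m12 m13 m22 m23).
Local Notation beta := (intv_beta K m12 m13 m22 m23 m33).
Local Notation piX := (intv_piX K m11 m12 m13).
Local Notation iotaY := (intv_iotaY K m13 m23 m33).

Definition intv23_part (v : 'rV[K]_(m12 + m13 + m22 + m23)) :
  'rV[K]_(m12 + m13 + m22 + m23) := row_mx 0 (rsubmx v).

Lemma intv23_part_alpha v : intv23_part v *m alpha = 0.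
Proof. by rewrite mul_row_col mul0mx mulmx0 addr0. Qed.

Lemma intv_alpha_piX_iotaY v :
  v *m alpha *m piX *m iotaY = v *m beta - intv23_part v *m beta.
Proof.
rewrite /intv23_part /intv_alpha /intv_piX /intv_iotaY /intv_beta.
rewrite -[v](hsubmxK v) row_mxKr !mul_row_col.
rewrite !mulmx0 !mul0mx !addr0 !add0r addrK -!mulmxA; congr (_ *m _).
rewrite mulmxA !mul_col_mx !mul_row_col ?mul0mx ?mulmx0 ?mul1mx ?add0r ?addr0.
by rewrite mul0mx mul1mx.
Qed.

End IntervalMatrices.

Theorem mainTheorem1 (K : fieldType) (HX HF HY : vectType K)
  (p : {linear HF -> HX}) (q : {linear HF -> HY})
  (m11 m12 m13 m22 m23 m33 : nat)
  (hX : {linear HX -> 'rV[K]_(m11 + m12 + m13)})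
  (hF : {linear HF -> 'rV[K]_(m12 + m13 + m22 + m23)})
  (hY : {linear HY -> 'rV[K]_(m13 + m23 + m33)})
  (hYinv : 'rV[K]_(m13 + m23 + m33) -> HY)
  (hX_bij : bijective hX) (hF_bij : bijective hF)
  (hYK : cancel hY hYinv) (hYinvK : cancel hYinv hY)
  (h_p : forall z : HF, hX (p z) = hF z *m intv_alpha K m11 m12 m13 m22 m23)
  (h_q : forall z : HF, hY (q z) = hF z *m intv_beta K m12 m13 m22 m23 m33)
  (p_surj : forall x : HX, exists z : HF, p z = x)
  (q_ker : forall z : HF, p z = 0 -> q z = 0) :
  forall z : HF,
    hYinv (hX (p z) *m intv_piX K m11 m12 m13 *m intv_iotaY K m13 m23 m33)
    = q z.
Proof.
move=> z.
have kill23 := ker_mulmx_transport (bij_inj hX_bij) hF_bij h_p h_q q_ker.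
rewrite h_p intv_alpha_piX_iotaY (kill23 (intv23_part _)) ?intv23_part_alpha //.
by rewrite subr0 -h_q hYK.
Qed.
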